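(* Let $\mathbf{M}\in\mathbb{R}^{n\times n}$ be a symmetric positive definite matrix, let $\boldsymbol{\varphi}\in\mathbb{R}^n$, and let $\mathbf{H}=(H_1,\dots,H_m)^\intercal:\mathbb{R}^n\to\mathbb{R}^m$ be differentiable at $\boldsymbol{\varphi}$, with Jacobian $\nabla\mathbf{H}(\boldsymbol{\varphi})\in\mathbb{R}^{m\times n}$ whose $i$-th row is $\nabla H_i(\boldsymbol{\varphi})$. Fix an index $k\in\{1,\dots,m\}$ and let $\mathbf{H}^{-k}:\mathbb{R}^n\to\mathbb{R}^{m-1}$ denote $\mathbf{H}$ with its $k$-th component removed. Suppose $(\Delta\boldsymbol{\varphi},\Delta\boldsymbol{\gamma})\in\mathbb{R}^n\times\mathbb{R}^m$ solves $$\mathbf{M}\Delta\boldsymbol{\varphi}=\nabla\mathbf{H}(\boldsymbol{\varphi})^\intercal\Delta\boldsymbol{\gamma},\qquad \mathbf{H}(\boldsymbol{\varphi})+\nabla\mathbf{H}(\boldsymbol{\varphi})\Delta\boldsymbol{\varphi}=0,$$ and $(\Delta\tilde{\boldsymbol{\varphi}},\Delta\tilde{\boldsymbol{\gamma}})\in\mathbb{R}^n\times\mathbb{R}^{m-1}$ solves $$\mathbf{M}\Delta\tilde{\boldsymbol{\varphi}}=\nabla\mathbf{H}^{-k}(\boldsymbol{\varphi})^\intercal\Delta\tilde{\boldsymbol{\gamma}},\qquad \mathbf{H}^{-k}(\boldsymbol{\varphi})+\nabla\mathbf{H}^{-k}(\boldsymbol{\varphi})\Delta\tilde{\boldsymbol{\varphi}}=0.$$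 Then, with $\Delta\gamma_k$ the $k$-th component of $\Delta\boldsymbol{\gamma}$, $$\Delta\gamma_k\cdot\bigl(H_k(\boldsymbol{\varphi})+\nabla H_k(\boldsymbol{\varphi})\Delta\tilde{\boldsymbol{\varphi}}\bigr)\le 0.$$
   Context: The second system is obtained from the first by removing the $k$-th linearized constraint $H_k(\boldsymbol{\varphi})+\nabla H_k(\boldsymbol{\varphi})\Delta\boldsymbol{\varphi}=0$ (and its multiplier); $\Delta\boldsymbol{\gamma}$ are the Lagrange multipliers of the constraints in the first system. In the paper $\mathbf{M}$ is a mass matrix, hence symmetric positive definite. *)

From HB Require Import structures.
From mathcomp Require Import all_boot all_order all_algebra.
From mathcomp Require Import all_classical all_reals all_analysis.
Set Implicit Arguments. Unset Strict Implicit. Unset Printing Implicit Defensive.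
Import Order.TTheory GRing.Theory Num.Theory.
Import numFieldNormedType.Exports.
Local Open Scope ring_scope.

Definition spd (R : realType) n (M : 'M[R]_n) : Prop :=
  M^T = M /\ forall x : 'cV[R]_n, x != 0 -> 0 < (x^T *m M *m x) 0 0.

(* MathComp-Analysis' 'J f p is the n x m matrix of the differential acting on
   row vectors, i.e. the transpose of the usual Jacobian. *)
Definition jac (R : realType) n m (H : 'rV[R]_n -> 'rV[R]_m) (phi : 'rV[R]_n)
  : 'M[R]_(m, n) := (jacobian H phi)^T.

Definition Hdel (R : realType) n m (k : 'I_m) (H : 'rV[R]_n -> 'rV[R]_m)
  : 'rV[R]_n -> 'rV[R]_(m.-1) := fun x => col' k (H x).

From HB Require Import structures.
From mathcomp Require Import all_boot all_order all_algebra.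
From mathcomp Require Import all_classical all_reals all_analysis.
Set Implicit Arguments. Unset Strict Implicit. Unset Printing Implicit Defensive.
Import Order.TTheory GRing.Theory Num.Theory.
Import numFieldNormedType.Exports.
Local Open Scope ring_scope.

(* Write r = H(phi) + nabla H(phi) dphit for the full residual at the relaxed
   step and d = dphit - dphi.  The first system makes r = nabla H(phi) d, and
   the second makes every entry of r but the k-th vanish.  Stationarity of the
   two systems gives dgam^T r = dphi^T M d and 0 = dphit^T M d, so
   dgam_k r_k = dgam^T r = - d^T M d <= 0. *)

Lemma mx_norm_col' (R : realFieldType) p q (k : 'I_q) (A : 'M[R]_(p, q)) :
  `|col' k A| <= `|A|.
Proof.
change (mx_norm (col' k A) <= mx_norm A); rewrite !mx_normrE.
apply: bigmax_le => [|[i j] _]; first exact: bigmax_ge_id.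
by apply/bigmax_geP; right; exists (i, lift k j); rewrite ?mxE.
Qed.

Lemma col'_continuous (R : realFieldType) p q (k : 'I_q) :
  continuous (@col' R p q k).
Proof.
apply: bounded_linear_continuous; apply/linear_boundedP; near=> r => A.
by rewrite (le_trans (mx_norm_col' k A)) // ler_peMl.
Unshelve. all: by end_near. Qed.

Lemma jac_Hdel (R : realType) n m (k : 'I_m) (H : 'rV[R]_n -> 'rV[R]_m) phi :
  differentiable H phi -> jac (Hdel k H) phi = row' k (jac H phi).
Proof.
move=> dH; rewrite /jac /Hdel /jacobian -tr_col'; congr (_^T).
apply/matrixP => i j; rewrite !mxE -[fun x => _]/(col' k \o H) diff_comp //=.
  by rewrite diff_lin ?mxE //; exact: col'_continuous.
by apply: linear_differentiable; exact: col'_continuous.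
Qed.

Lemma trmx_mul_row'0 (R : comNzRingType) m (k : 'I_m) (u v : 'cV[R]_m) :
  row' k v = 0 -> (u^T *m v) 0 0 = u k 0 * v k 0.
Proof.
move=> vk0; rewrite !mxE (bigD1 k) //= big1 ?addr0 ?mxE // => i.
case: (unliftP k i) => [j ->|->]; last by rewrite eqxx.
by move=> _; have /matrixP/(_ j 0) := vk0; rewrite !mxE => ->; rewrite mulr0.
Qed.

Lemma trmx_stationary (R : comNzRingType) n p (M : 'M[R]_n) (B : 'M[R]_(p, n))
    (x : 'cV[R]_n) (g : 'cV[R]_p) :
  M^T = M -> M *m x = B^T *m g -> g^T *m B = x^T *m M.
Proof. by move=> M_sym Mx; rewrite -[B]trmxK -trmx_mul -Mx trmx_mul M_sym. Qed.

Section DeletedConstraint.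

Variables (R : realFieldType) (n m : nat) (M : 'M[R]_n).
Variables (J : 'M[R]_(m, n)) (h : 'cV[R]_m) (k : 'I_m).
Hypothesis M_sym : M^T = M.
Hypothesis M_psd : forall v : 'cV[R]_n, 0 <= (v^T *m M *m v) 0 0.

Variables (x : 'cV[R]_n) (g : 'cV[R]_m) (y : 'cV[R]_n) (g' : 'cV[R]_(m.-1)).
Hypothesis Mx : M *m x = J^T *m g.
Hypothesis x_feas : h + J *m x = 0.
Hypothesis My : M *m y = (row' k J)^T *m g'.
Hypothesis y_feas : row' k h + row' k J *m y = 0.

Lemma residualE : h + J *m y = J *m (y - x).
Proof.
have -> : h = - (J *m x) by apply/eqP; rewrite -addr_eq0 x_feas.
by rewrite mulmxBr addrC.
Qed.

Lemma row'_residual : row' k (h + J *m y) = 0.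
Proof. by rewrite -y_feas linearD mul_rowsub_mx. Qed.

Lemma multiplier_residual :
  g^T *m (h + J *m y) = - ((y - x)^T *m M *m (y - x)).
Proof.
have y_orth : y^T *m M *m (y - x) = 0.
  rewrite -(trmx_stationary M_sym My) -mulmxA mul_rowsub_mx.
  by rewrite -residualE -[rowsub _ _]/(row' k _) row'_residual mulmx0.
rewrite residualE mulmxA (trmx_stationary M_sym Mx).
by rewrite [(y - x)^T]linearB /= !mulmxBl y_orth sub0r opprK.
Qed.

Lemma deleted_multiplier_residual_le0 : g k 0 * (h + J *m y) k 0 <= 0.
Proof.
rewrite -(trmx_mul_row'0 g row'_residual) multiplier_residual mxE oppr_le0.
exact: M_psd.
Qed.

End DeletedConstraint.

Theorem mainTheorem1 (R : realType) (n m : nat) (M : 'M[R]_n)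
  (H : 'rV[R]_n -> 'rV[R]_m) (phi : 'rV[R]_n) (k : 'I_m)
  (dphi : 'cV[R]_n) (dgam : 'cV[R]_m)
  (dphit : 'cV[R]_n) (dgamt : 'cV[R]_(m.-1)) :
  spd M ->
  differentiable H phi ->
  M *m dphi = (jac H phi)^T *m dgam ->
  (H phi)^T + jac H phi *m dphi = 0 ->
  M *m dphit = (jac (Hdel k H) phi)^T *m dgamt ->
  (Hdel k H phi)^T + jac (Hdel k H) phi *m dphit = 0 ->
  dgam k 0 * ((H phi) 0 k + (jac H phi *m dphit) k 0) <= 0.
Proof.
move=> [M_sym M_pos] dH Mdphi feas; rewrite jac_Hdel // /Hdel tr_col'.
move=> Mdphit feas_del.
have M_psd (v : 'cV[R]_n) : 0 <= (v^T *m M *m v) 0 0.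
  have [->|v0] := eqVneq v 0; last exact: ltW (M_pos v v0).
  by rewrite mulmx0 mxE.
have := deleted_multiplier_residual_le0 M_sym M_psd Mdphi feas Mdphit feas_del.
by rewrite [in X in X -> _]mxE [(H phi)^T _ _]mxE.
Qed.
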